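(* Let $L$ be a bounded lattice and $A:L^2\to L$ a uninorm with neutral element $a\in L$. A function $F:L^2\to L$ is $A$-migrative if and only if there exists a function $f:L\to L$ such that $F(x,y)=f(A(x,y))$ for all $x,y\in L$.
   Context: A uninorm on $L$ is a map $A:L^2\to L$ that is commutative, associative, non-decreasing in each argument and has a neutral element $a\in L$ ($A(a,x)=x$ for all $x$). For $\alpha\in L$, $F:L^2\to L$ is $(\alpha,A)$-migrative if $F(A(\alpha,x),y)=F(x,A(\alpha,y))$ for all $x,y\in L$; $F$ is $A$-migrative if it is $(\alpha,A)$-migrative for every $\alpha\in L$. *)

From HB Require Import structures.
From mathcomp Require Import all_boot all_order.
Set Implicit Arguments. Unset Strict Implicit. Unset Printing Implicit Defensive.
Import Order.TTheory.
Local Open Scope order_scope.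

Definition uninorm (disp : Order.disp_t) (L : tbLatticeType disp)
    (A : L -> L -> L) (a : L) : Prop :=
  [/\ (forall x y, A x y = A y x),
      (forall x y z, A x (A y z) = A (A x y) z),
      (forall x1 x2 y, x1 <= x2 -> A x1 y <= A x2 y),
      (forall x y1 y2, y1 <= y2 -> A x y1 <= A x y2)
    & (forall x, A a x = x)].

Definition migrative_at (L : Type) (A F : L -> L -> L) (alpha : L) : Prop :=
  forall x y, F (A alpha x) y = F x (A alpha y).

Definition migrative (L : Type) (A F : L -> L -> L) : Prop :=
  forall alpha, migrative_at A F alpha.

From HB Require Import structures.
From mathcomp Require Import all_boot all_order.

(* Only the algebraic part of the uninorm axioms matters:
   commutativity, associativity and the neutral element a. *)

Section MigrativeFactorization.

Variables (T : Type) (A F : T -> T -> T) (a : T).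
Hypothesis A_comm : forall x y, A x y = A y x.
Hypothesis A_assoc : forall x y z, A x (A y z) = A (A x y) z.

Lemma factor_migrative (f : T -> T) :
  (forall x y, F x y = f (A x y)) -> migrative A F.
Proof.
move=> Ff al x y; rewrite !Ff.
by rewrite [A al x]A_comm -A_assoc [A al y]A_comm.
Qed.

Hypothesis A_neutral : forall x, A a x = x.

Lemma migrative_factor :
  migrative A F -> forall x y, F x y = F (A x y) a.
Proof.
move=> migF x y; have := migF y x a.
by rewrite A_comm [A y a]A_comm !A_neutral => ->.
Qed.

End MigrativeFactorization.

Theorem mainTheorem6 (disp : Order.disp_t) (L : tbLatticeType disp)
    (A : L -> L -> L) (a : L) (hA : uninorm A a) (F : L -> L -> L) :
  migrative A F <-> exists f : L -> L, forall x y, F x y = f (A x y).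
Proof.
have [A_comm A_assoc _ _ A_neutral] := hA.
split=> [migF | [f Ff]].
- by exists (fun z => F z a); exact: migrative_factor.
- exact: factor_migrative Ff.
Qed.
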